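(* Let $A\subseteq\Omega$ be arbitrary. Then: (i) for each $\varepsilon>0$ there exists a $\mathcal{P}$-e-process $(E^\varepsilon_t)_{t\in\mathbb{N}_0}$ such that $\lim_{t\to\infty}E^\varepsilon_t = 1/(\mu^*(A)+\varepsilon)$ at every point of $A$; (ii) for any $c\in[1,\infty]$, if there exists a $\mathcal{P}$-e-process $(E_t)_{t\in\mathbb{N}_0}$ such that $\sup_{t\in\mathbb{N}_0}E_t\ge c$ at every point of $A$, then $\mu^*(A)\le 1/c$ (with $1/\infty=0$).
   Context: Standing setup: $(\Omega, (\mathcal{F}_t)_{t\in\mathbb{N}_0}, \mathcal{F})$ is a filtered measurable space with $\mathcal{F} = \sigma\big(\bigcup_{t} \mathcal{F}_t\big)$. A stopping time is a map $\tau:\Omega\to\mathbb{N}_0\cup\{\infty\}$ with $\{\tau \le t\}\in\mathcal{F}_t$ for all $t$; $\mathcal{T}$ denotes the set of all stopping times. $\mathcal{P}$ is an arbitrary family of probability measures on $\mathcal{F}$. The inverse-capital measure is defined for every $A\subseteq\Omega$ by $\mu^*(A) = \inf_{\tau\in\mathcal{T}:\, A\subseteq\{\tau<\infty\}} \sup_{\mathbb{P}\in\mathcal{P}} \mathbb{P}(\tau<\infty)$. A $\mathcal{P}$-e-process is a nonnegative (possibly $[0,\infty]$-valued) process $(E_t)_{t\in\mathbb{N}_0}$ adapted to $(\mathcal{F}_t)$ such that $\mathbb{E}_{\mathbb{P}}[E_\tau]\le 1$ for every $\mathbb{P}\in\mathcal{P}$ and every $\tau\in\mathcal{T}$, with the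 convention $E_\infty=\limsup_{t\to\infty}E_t$. *)

From HB Require Import structures.
From mathcomp Require Import all_boot all_order all_algebra.
From mathcomp Require Import all_classical all_reals all_analysis measurable_realfun.
Set Implicit Arguments. Unset Strict Implicit. Unset Printing Implicit Defensive.
Import Order.TTheory GRing.Theory Num.Theory.
Local Open Scope classical_set_scope.
Local Open Scope ring_scope.

Section Defs.
Context {d : measure_display} {T : measurableType d} {R : realType}.

Definition is_filtration (F : nat -> set (set T)) : Prop :=
  [/\ forall t, sigma_algebra setT (F t),
      forall t, F t `<=` F t.+1 &
      (@measurable d T) = <<s \bigcup_(t in setT) F t >>].

(* Stopping times with values in N_0 \cup {infinity}; None encodes infinity. *)
Definition stopping_time (F : nat -> set (set T)) (tau : T -> option nat) : Prop :=
  forall t : nat, F t [set w | exists2 n, tau w = Some n & (n <= t)%N].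

Definition finite_set (tau : T -> option nat) : set T := [set w | tau w <> None].

(* mu^*(A) = inf_{tau : A ⊆ {tau < oo}} sup_{P in Pfam} P(tau < oo);
   the sup over P is taken in [0, +oo] (value 0 for an empty family). *)
Definition mustar (F : nat -> set (set T)) (Pfam : set (probability T R))
    (A : set T) : \bar R :=
  ereal_inf [set ereal_sup ([set P (finite_set tau) | P in Pfam] `|` [set 0%E])
            | tau in [set tau | stopping_time F tau /\ A `<=` finite_set tau]].

Definition stopped (E : nat -> T -> \bar R) (tau : T -> option nat) : T -> \bar R :=
  fun w => match tau w with
           | Some n => E n w
           | None => limn_esup (fun t => E t w)
           end.

Definition e_process (F : nat -> set (set T)) (Pfam : set (probability T R))
    (E : nat -> T -> \bar R) : Prop :=
  [/\ forall t w, (0 <= E t w)%E,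
      forall t (B : set (\bar R)), measurable B -> F t (E t @^-1` B) &
      forall P tau, Pfam P -> stopping_time F tau ->
        (\int[P]_w stopped E tau w <= 1)%E].

Definition inv_ext (c : \bar R) : \bar R :=
  match c with
  | r%:E => (r^-1)%:E
  | _ => 0%E
  end.

End Defs.

(* (i) If a stopping time [tau] covers [A] and [P(tau < oo) < mu*(A) + eps]
   for every [P], the process [1{tau <= t} / (mu*(A) + eps)] is an e-process
   (its value at any stopping time is dominated by [1{tau < oo} / (mu*(A) + eps)]),
   and it converges to [1 / (mu*(A) + eps)] on [A].
   (ii) If [sup_t E_t >= c > r] on [A], the hitting time of level [r] covers [A],
   and Markov's inequality at that time gives [r P(tau < oo) <= E_P[E_tau] <= 1];
   hence [mu*(A) <= 1/r] for every [r < c]. *)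

From Pilot Require Import Defs.
From HB Require Import structures.
From mathcomp Require Import all_boot all_order all_algebra.
From mathcomp Require Import all_classical all_reals all_analysis measurable_realfun.
Import Order.TTheory GRing.Theory Num.Theory.
Local Open Scope classical_set_scope.
Local Open Scope ring_scope.

Section integral_lemmas.
Local Open Scope ereal_scope.
Context {d : measure_display} {T : measurableType d} {R : realType}.
Variable mu : {measure set T -> \bar R}.

(* No measurability is needed: over the whole space the integral of a
   nonnegative function is a supremum of integrals of simple functions. *)
Lemma ge0_le_integralT (f g : T -> \bar R) :
  (forall x, 0 <= f x) -> (forall x, f x <= g x) ->
  \int[mu]_x f x <= \int[mu]_x g x.
Proof.
move=> f0 fg.
have g0 x : 0 <= g x by exact: le_trans (f0 x) (fg x).
rewrite !ge0_integralTE//; apply: ereal_sup_le => _ [h hf <-].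
by exists h => // x; exact: le_trans (hf x) (fg x).
Qed.

Lemma integral_scaled_indic (k : R) (S : set T) : (0 <= k)%R -> measurable S ->
  \int[mu]_x (k * \1_S x)%:E = k%:E * mu S.
Proof.
move=> k0 mS.
rewrite (@integralZl_indic _ _ _ mu setT measurableT (fun _ => S))//.
  by rewrite integral_indic// setIT.
by move=> /lt_le_trans/(_ k0); rewrite ltxx.
Qed.

End integral_lemmas.

Lemma scaled_indic_ge0 (T : Type) (R : realType) (k : R) (S : set T) x :
  0 <= k -> (0 <= (k * \1_S x)%:E)%E.
Proof. by move=> k0; rewrite lee_fin mulr_ge0// indicE; case: (_ \in _). Qed.

Lemma limn_esup_ge (R : realType) (a : \bar R) (u : (\bar R)^nat) :
  (forall t, (a <= u t)%E) -> (a <= limn_esup u)%E.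
Proof.
move=> au; rewrite limn_esup_lim; apply: lime_ge; first exact: is_cvg_esups.
apply: nearW => n; apply: le_trans (au n) _.
by apply: ereal_sup_ubound; exists n => /=.
Qed.

Lemma le_inv_ext (R : realType) (x : R) (c : \bar R) : (1 <= c)%E ->
  (forall r, 0 < r -> (r%:E < c)%E -> x <= r^-1) -> (x%:E <= inv_ext c)%E.
Proof.
case: c => [c| |] //= c1 xle; rewrite lee_fin; apply/ler_addgt0Pr => e e0.
- have c0 : 0 < c^-1 by rewrite invr_gt0 (lt_le_trans ltr01)// -lee_fin.
  have ce0 : 0 < c^-1 + e by rewrite addr_gt0.
  rewrite -[c^-1 + e]invrK; apply: xle; first by rewrite invr_gt0.
  by rewrite lte_fin -[X in _ < X]invrK ltf_pV2 ?posrE ?ltrDl.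
- by rewrite add0r -[e]invrK; apply: xle => //; rewrite ?ltey ?invr_gt0.
Qed.

Section filtration.
Context {d : measure_display} {T : measurableType d}.
Context {F : nat -> set (set T)} (hF : is_filtration F).

Lemma filtration_measurable t A : F t A -> measurable A.
Proof. by case: hF => _ _ -> FA; apply: sub_sigma_algebra; exists t. Qed.

Lemma filtration_le {s t} : (s <= t)%N -> F s `<=` F t.
Proof.
case: hF => _ Fi _; elim: t => [|t IH]; first by rewrite leqn0 => /eqP ->.
by rewrite leq_eqVlt => /orP[/eqP -> //|/IH st A /st]; exact: Fi.
Qed.

Lemma filtration_set0 t : F t set0.
Proof. by case: hF => /(_ t) []. Qed.

Lemma filtration_setC t A : F t A -> F t (~` A).
Proof. by case: hF => /(_ t) [_ FD _] _ _ /FD; rewrite setTD. Qed.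

Lemma filtration_setT t : F t setT.
Proof. by rewrite -setC0; exact/filtration_setC/filtration_set0. Qed.

Lemma filtration_bigcup t (U : (set T)^nat) :
  (forall n, F t (U n)) -> F t (\bigcup_n U n).
Proof. by case: hF => /(_ t) [_ _ FU] _ _; exact: FU. Qed.

Definition before (tau : T -> option nat) t : set T :=
  [set w | exists2 n, tau w = Some n & (n <= t)%N].

Lemma finite_setE tau : Defs.finite_set tau = \bigcup_t before tau t.
Proof.
apply/seteqP; split => w; rewrite /Defs.finite_set /before /=.
  by case tw: (tau w) => [n|] // _; exists n => //; exists n.
by move=> [t _ [n -> _]].
Qed.

Lemma stopping_time_finite_measurable tau :
  stopping_time F tau -> measurable (Defs.finite_set tau).
Proof.
move=> st; rewrite finite_setE; apply: bigcupT_measurable => t.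
exact: (@filtration_measurable t).
Qed.

Lemma stopping_time_cst n : stopping_time F (fun=> Some n).
Proof.
move=> t; change (F t (before (fun=> Some n) t)); have [nt|tn] := leqP n t.
  suff -> : before (fun=> Some n) t = setT by exact: filtration_setT.
  by apply/seteqP; split => // w _; exists n.
suff -> : before (fun=> Some n) t = set0 by exact: filtration_set0.
by apply/seteqP; split => // w [_ [<-]]; rewrite leqNgt tn.
Qed.

Lemma preimage_scaled_indic (R : realType) t (S : set T) (k : R) (B : set \bar R) :
  F t S -> F t ((fun w => (k * \1_S w)%:E) @^-1` B).
Proof.
move=> FS; rewrite (_ : _ @^-1` _ = \1_S @^-1` ((fun x => (k * x)%:E) @^-1` B))//.
rewrite preimage_indic; repeat case: ifP => _.
- exact: filtration_setT.
- exact: FS.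
- exact: filtration_setC.
- exact: filtration_set0.
Qed.

End filtration.

Section e_processes.
Local Open Scope ereal_scope.
Context {d : measure_display} {T : measurableType d} {R : realType}.
Context {F : nat -> set (set T)} {Pfam : set (probability T R)}.
Context (hF : is_filtration F).

Lemma mustar_le_stopping_time A tau (y : \bar R) :
  stopping_time F tau -> A `<=` Defs.finite_set tau -> 0 <= y ->
  (forall P, Pfam P -> P (Defs.finite_set tau) <= y) -> mustar F Pfam A <= y.
Proof.
move=> st Atau y0 Ptau; apply: le_trans (ereal_inf_lbound _) _.
  by exists tau.
by apply: ge_ereal_sup => _ [[P /Ptau PS <-]|->].
Qed.

Lemma mustar_ge0 A : 0 <= mustar F Pfam A.
Proof.
by apply: le_ereal_inf_tmp => _ [tau _ <-]; apply: ereal_sup_ubound; right.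
Qed.

Lemma mustar_le1 A : mustar F Pfam A <= 1.
Proof.
have st0 := stopping_time_cst hF 0.
apply: (@mustar_le_stopping_time A _ 1 st0) => // P _.
exact/probability_le1/(stopping_time_finite_measurable hF).
Qed.

Lemma mustarE A : mustar F Pfam A = (fine (mustar F Pfam A))%:E.
Proof.
by rewrite fineK// ge0_fin_numE ?mustar_ge0// (le_lt_trans (mustar_le1 A)) ?ltey.
Qed.

Lemma stopped_ge0 (E : nat -> T -> \bar R) tau w :
  (forall t w, 0 <= E t w) -> 0 <= stopped E tau w.
Proof.
by move=> E0; rewrite /stopped; case: (tau w) => [n|]; last apply: limn_esup_ge.
Qed.

Definition indicator_process (tau : T -> option nat) (k : R) : nat -> T -> \bar R :=
  fun t w => (k * \1_(before tau t) w)%:E.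

Lemma indicator_process_cvg tau k w :
  (fun t => indicator_process tau k t w) @ \oo -->
  (k * \1_(Defs.finite_set tau) w)%:E.
Proof.
apply: cvg_near_cst; rewrite /indicator_process.
case tw: (tau w) => [m|].
  exists m => // t /= mt; rewrite !indicE !mem_set//.
    by rewrite /Defs.finite_set /= tw.
  by exists m.
by exists 0%N => // t _; rewrite !indicE !memNset// => -[n]; rewrite tw.
Qed.

Lemma indicator_process_stopped_le tau k sigma w : (0 <= k)%R ->
  stopped (indicator_process tau k) sigma w <= (k * \1_(Defs.finite_set tau) w)%:E.
Proof.
move=> k0; rewrite /stopped; case: (sigma w) => [n|].
  rewrite /indicator_process !indicE lee_fin ler_wpM2l//.
  case: (boolP (w \in before tau n)) => // /set_mem [m tw _].
  by rewrite mem_set// /Defs.finite_set /= tw.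
have kcvg := indicator_process_cvg tau k w.
by rewrite (is_cvg_limn_esupE (cvgP _ kcvg)) (cvg_lim _ kcvg).
Qed.

Lemma indicator_e_process tau k : stopping_time F tau -> (0 <= k)%R ->
  (forall P, Pfam P -> k%:E * P (Defs.finite_set tau) <= 1) ->
  e_process F Pfam (indicator_process tau k).
Proof.
move=> st k0 Pk; have mtau := stopping_time_finite_measurable hF _ st.
split.
- by move=> t w; exact: scaled_indic_ge0.
- by move=> t B _; apply: (preimage_scaled_indic hF); exact: st.
- move=> P sigma /Pk Pk1 _; apply: le_trans Pk1; rewrite -integral_scaled_indic//.
  apply: ge0_le_integralT => w; last exact: indicator_process_stopped_le.
  by apply: stopped_ge0 => t x; exact: scaled_indic_ge0.
Qed.

(* [tau] covers [A] with [sup_P P(tau < oo) < mu*(A) + eps]. *)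
Lemma e_process_cvg_inv_mustar A (eps : R) : (0 < eps)%R ->
  exists E : nat -> T -> \bar R, e_process F Pfam E /\
    forall w, A w ->
      (fun t => E t w) @ \oo --> ((fine (mustar F Pfam A) + eps)^-1)%:E.
Proof.
move=> eps0; set x := fine (mustar F Pfam A).
have x0 : (0 <= x)%R by rewrite -lee_fin -mustarE mustar_ge0.
have : mustar F Pfam A < (x + eps)%:E by rewrite mustarE lte_fin ltrDl.
case/ereal_inf_lt => _ [tau [st Atau] <-] tau_lt.
have xe0 : (0 < x + eps)%R by rewrite ltr_wpDl.
exists (indicator_process tau (x + eps)^-1); split.
  apply: indicator_e_process => // [|P HP]; first by rewrite invr_ge0 ltW.
  rewrite -lee_pdivlMl ?invr_gt0// invrK mule1.
  by apply: le_trans (ltW tau_lt); apply: ereal_sup_ubound; left; exists P.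
move=> w /Atau Aw; have := indicator_process_cvg tau (x + eps)^-1 w.
by rewrite indicE mem_set// mulr1.
Qed.

Definition hitting_time (E : nat -> T -> \bar R) (r : \bar R) (w : T) : option nat :=
  match pselect (exists t, r <= E t w) with
  | left h => Some (ex_minn h)
  | right _ => None
  end.

Lemma hitting_time_Some {E r w n} : hitting_time E r w = Some n ->
  r <= E n w /\ forall m, r <= E m w -> (n <= m)%N.
Proof. by rewrite /hitting_time; case: pselect => // h [<-]; case: ex_minnP. Qed.

Lemma hitting_time_None {E r w} : hitting_time E r w = None ->
  forall m, ~ r <= E m w.
Proof. by rewrite /hitting_time; case: pselect => // h _ m hm; apply: h; exists m. Qed.

Lemma finite_hitting_time E r w :
  (exists t, r <= E t w) -> Defs.finite_set (hitting_time E r) w.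
Proof. by move=> [t rE] hw; exact: hitting_time_None hw t rE. Qed.

Lemma hitting_time_stopping_time E r :
  (forall t (B : set (\bar R)), measurable B -> F t (E t @^-1` B)) ->
  stopping_time F (hitting_time E r).
Proof.
move=> Eadapted t; change (F t (before (hitting_time E r) t)).
have -> : before (hitting_time E r) t =
    \bigcup_n (if (n <= t)%N then E n @^-1` `[r, +oo[ else set0).
  apply/seteqP; split => w /=.
    move=> [n /hitting_time_Some [rE _] nt]; exists n => //.
    by rewrite nt /= in_itv /= rE.
  move=> [n _]; case: ifP => // nt; rewrite /= in_itv /= andbT => rE.
  case hw: (hitting_time E r w) => [m|]; last by case: (hitting_time_None hw n).
  by exists m => //; have [_ /(_ n rE) mn] := hitting_time_Some hw; exact: leq_trans nt.
apply: (filtration_bigcup hF) => n; case: ifP => nt; last exact: filtration_set0.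
exact/(filtration_le hF nt)/Eadapted/emeasurable_itv.
Qed.

(* Markov's inequality at the hitting time of level [r]. *)
Lemma e_process_hitting_prob E (r : R) P : e_process F Pfam E -> (0 < r)%R ->
  Pfam P -> r%:E * P (Defs.finite_set (hitting_time E r%:E)) <= 1.
Proof.
move=> [E0 Eadapted Eint] r0 HP; have st := hitting_time_stopping_time _ r%:E Eadapted.
apply: le_trans (Eint P _ HP st).
rewrite -integral_scaled_indic; [|exact: ltW|exact: stopping_time_finite_measurable hF _ st].
apply: ge0_le_integralT => w; first by rewrite scaled_indic_ge0// ltW.
rewrite indicE; case: (boolP (w \in _)) => [|_]; last by rewrite mulr0 stopped_ge0.
rewrite /stopped mulr1 inE /Defs.finite_set /=.
by case hw: hitting_time => [n|] // _; have [] := hitting_time_Some hw.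
Qed.

Lemma mustar_le_inv_level E A (r : R) : e_process F Pfam E -> (0 < r)%R ->
  (forall w, A w -> exists t, r%:E <= E t w) -> mustar F Pfam A <= (r^-1)%:E.
Proof.
move=> Ee r0 Ahit; have [_ Eadapted _] := Ee.
apply: (@mustar_le_stopping_time A _ _ (hitting_time_stopping_time _ r%:E Eadapted)).
- by move=> w /Ahit; exact: finite_hitting_time.
- by rewrite lee_fin invr_ge0 ltW.
- move=> P HP; rewrite -[X in _ <= X]mul1e lee_pdivlMr// muleC.
  exact: e_process_hitting_prob.
Qed.

End e_processes.

Theorem mainTheorem4 (d : measure_display) (T : measurableType d) (R : realType)
    (F : nat -> set (set T)) (Pfam : set (probability T R)) (A : set T) :
  is_filtration F ->
  (forall eps : R, 0 < eps ->
     exists E : nat -> T -> \bar R, e_process F Pfam E /\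
       forall w, A w ->
         (fun t => E t w) @ \oo --> ((fine (mustar F Pfam A) + eps)^-1)%:E) /\
  (forall c : \bar R, (1 <= c)%E ->
     (exists E : nat -> T -> \bar R, e_process F Pfam E /\
        forall w, A w -> (c <= ereal_sup (range (fun t => E t w)))%E) ->
     (mustar F Pfam A <= inv_ext c)%E).
Proof.
move=> hF; split; first exact: (e_process_cvg_inv_mustar hF).
move=> c c1 [E [Ee Ac]]; rewrite (mustarE hF); apply: le_inv_ext => // r r0 rc.
rewrite -lee_fin -(mustarE hF); apply: (mustar_le_inv_level hF) Ee r0 _ => w /Ac csup.
have [_ [t _ <-] /ltW rE] := ereal_sup_gt (lt_le_trans rc csup).
by exists t.
Qed.
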